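(* An FDS $A$ is cancellative, i.e. for all FDSs $B,C$ the equality $AB=AC$ implies $B=C$, if and only if $A$ has a fixpoint (a state $s\in S_A$ with $A(s)=s$).
   Context: A finite dynamical system (FDS) is a function $A:S_A\to S_A$ on a finite set $S_A$ (possibly empty). FDSs are considered up to isomorphism: $A=B$ means that their functional graphs (vertex set $S_A$, one arc $x\to A(x)$ for each $x$) are isomorphic digraphs. The product $AB$ of two FDSs is the function on $S_A\times S_B$ given by $(a,b)\mapsto (A(a),B(b))$. *)

From mathcomp Require Import all_boot.
Set Implicit Arguments. Unset Strict Implicit. Unset Printing Implicit Defensive.

Record FDS := MkFDS { state : finType; dyn : state -> state }.
Arguments dyn : clear implicits.

(* A = B up to isomorphism of functional graphs: a bijection conjugating
   the two functions. *)
Definition fds_iso (A B : FDS) : Prop :=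
  exists h : state A -> state B,
    bijective h /\ forall x, h (dyn A x) = dyn B (h x).

Definition fds_prod (A B : FDS) : FDS :=
  @MkFDS (state A * state B)%type (fun p => (dyn A p.1, dyn B p.2)).

Definition cancellative (A : FDS) : Prop :=
  forall B C : FDS, fds_iso (fds_prod A B) (fds_prod A C) -> fds_iso B C.

Definition has_fixpoint (A : FDS) : Prop := exists s : state A, dyn A s = s.

From mathcomp Require Import all_boot.

Set Implicit Arguments.
Unset Strict Implicit.
Unset Printing Implicit Defensive.

(* If A has a fixpoint we follow Lovasz: let nhom Y th count the homomorphisms
   X -> Y identifying every pair of the relation th on the states of X.  It is
   multiplicative in Y and positive at A (constant maps onto the fixpoint), so
   AB = AC forces nhom B = nhom C for all X and th.  Moebius inversion over the
   relations containing th then equates the numbers of homomorphisms with a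
   prescribed kernel; the identity of B has the diagonal kernel, which yields
   injective homomorphisms B -> C and C -> B, hence B = C.

   If A has no fixpoint, let Y_b consist of the pairs (S, x) with S a set of
   states of A of parity b and x q in the forward orbit of q, where x q moves
   along A exactly when q is in S.  Y_0 has the fixpoint (set0, id) while a
   fixpoint of Y_1 would give one of A.  Still AY_0 = AY_1: at the state a,
   toggle the membership in S of a canonical point r of the cycle that a falls
   into, and shift x r by the distance between r and the point A^|S_A|(a) of
   that cycle.  This is an involution, and it commutes with the dynamics because
   that point moves along with a. *)

Lemma fds_iso_sym (Y Z : FDS) : fds_iso Y Z -> fds_iso Z Y.
Proof.
move=> [h [[g hK gK] h_hom]]; exists g; split; first by exists h.
by move=> z; apply: (can_inj hK); rewrite h_hom !gK.
Qed.

Lemma fds_iso_fixpoint (Y Z : FDS) :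
  fds_iso Y Z -> has_fixpoint Y -> has_fixpoint Z.
Proof. by move=> [h [_ h_hom]] [y fix_y]; exists (h y); rewrite -h_hom fix_y. Qed.

Definition is_hom (X Y : FDS) (g : {ffun state X -> state Y}) : bool :=
  [forall x, g (dyn X x) == dyn Y (g x)].

Definition kernel (X Y : FDS) (g : {ffun state X -> state Y}) :
  {set state X * state X} := [set p | g p.1 == g p.2].

Definition nhom (X Y : FDS) (th : {set state X * state X}) : nat :=
  #|[set g : {ffun state X -> state Y} | is_hom g & th \subset kernel g]|.

Definition nhom_ker (X Y : FDS) (th : {set state X * state X}) : nat :=
  #|[set g : {ffun state X -> state Y} | is_hom g & kernel g == th]|.

Section HomCount.
Variable X : FDS.
Local Notation relX := {set state X * state X}.
Implicit Types (Y Z : FDS) (th : relX).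

Lemma nhomE Y th : nhom Y th = \sum_(th' : relX | th \subset th') nhom_ker Y th'.
Proof.
rewrite /nhom -sum1_card (partition_big (@kernel X Y) (fun th' => th \subset th')).
  apply: eq_bigr => th' th_sub; rewrite /nhom_ker -sum1_card; apply: eq_bigl => g.
  by rewrite !inE -andbA; have [->|_] := eqVneq (kernel g) th'; rewrite ?th_sub ?andbF.
by move=> g; rewrite inE => /andP[].
Qed.

Lemma nhom_ker_eq Y Z :
  (forall th, nhom Y th = nhom Z th) -> forall th, nhom_ker Y th = nhom_ker Z th.
Proof.
move=> eq_nhom th; have [n] := ubnP #|~: th|; elim: n th => // n IHn th.
rewrite ltnS => le_th_n.
have eq_rest : \sum_(th' : relX | (th \subset th') && (th' != th)) nhom_ker Z th' =
               \sum_(th' : relX | (th \subset th') && (th' != th)) nhom_ker Y th'.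
  apply: eq_bigr => th' /andP[th_sub neq_th']; symmetry; apply: IHn.
  apply: leq_trans le_th_n; apply: proper_card.
  by rewrite properC properEneq eq_sym neq_th' th_sub.
have := nhomE Y th; rewrite eq_nhom nhomE.
by rewrite (bigD1 th) ?subxx // [in RHS](bigD1 th) ?subxx //= eq_rest => /addIn.
Qed.

Lemma nhom_prod A B th : nhom (fds_prod A B) th = nhom A th * nhom B th.
Proof.
pose unpair (g : {ffun state X -> state (fds_prod A B)}) :=
  ([ffun x => (g x).1] : {ffun state X -> state A},
   [ffun x => (g x).2] : {ffun state X -> state B}).
pose pair (u : {ffun state X -> state A} * {ffun state X -> state B}) :=
  [ffun x => (u.1 x, u.2 x)] : {ffun state X -> state (fds_prod A B)}.
have pairK : cancel unpair pair.
  by move=> g; apply/ffunP => x; rewrite !ffunE; case: (g x).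
have unpairK : cancel pair unpair.
  by case=> g1 g2; congr (_, _); apply/ffunP => x; rewrite !ffunE.
rewrite /nhom -cardsX -(card_imset _ (can_inj pairK)); apply: eq_card => u.
rewrite -[u in LHS]unpairK (mem_imset _ _ (can_inj pairK)).
case: u => g1 g2; rewrite !inE /=.
have -> : is_hom (pair (g1, g2)) = is_hom g1 && is_hom g2.
  apply/forallP/andP => [hom12 | [/forallP hom1 /forallP hom2] x].
    by split; apply/forallP => x; have := hom12 x; rewrite !ffunE xpair_eqE => /andP[].
  by rewrite !ffunE xpair_eqE hom1 hom2.
have -> : (th \subset kernel (pair (g1, g2))) =
          (th \subset kernel g1) && (th \subset kernel g2).
  rewrite -subsetI; apply: eq_subset_r => p.
  by rewrite !inE !ffunE xpair_eqE.
by rewrite andbACA.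
Qed.

Lemma nhom_iso Y Z th : fds_iso Y Z -> nhom Y th = nhom Z th.
Proof.
suff nhom_le (Y' Z' : FDS) : fds_iso Y' Z' -> nhom Y' th <= nhom Z' th.
  by move=> isoYZ; apply/eqP; rewrite eqn_leq !nhom_le //; apply: fds_iso_sym.
move=> [h [h_bij h_hom]].
pose comp (g : {ffun state X -> state Y'}) :=
  [ffun x => h (g x)] : {ffun state X -> state Z'}.
have comp_inj : injective comp.
  move=> g g' /ffunP eq_comp; apply/ffunP => x.
  by have := eq_comp x; rewrite !ffunE => /(bij_inj h_bij).
rewrite /nhom -(card_imset _ comp_inj); apply/subset_leq_card/subsetP.
move=> _ /imsetP[g + ->]; rewrite !inE => /andP[/forallP g_hom th_sub].
apply/andP; split.
  by apply/forallP => x; rewrite !ffunE (eqP (g_hom x)) h_hom.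
by apply/subsetP => p /(subsetP th_sub); rewrite !inE !ffunE => /eqP ->.
Qed.

Lemma nhom_gt0 Y th : has_fixpoint Y -> 0 < nhom Y th.
Proof.
move=> [y fix_y]; apply/card_gt0P; exists [ffun => y]; rewrite inE.
apply/andP; split; first by apply/forallP => x; rewrite !ffunE fix_y.
by apply/subsetP => p _; rewrite inE !ffunE.
Qed.

End HomCount.

Definition same_nhom (Y Z : FDS) : Prop :=
  forall (X : FDS) (th : {set state X * state X}), nhom Y th = nhom Z th.

Lemma same_nhom_injective_hom Y Z :
  same_nhom Y Z -> exists2 g : {ffun state Y -> state Z}, is_hom g & injective g.
Proof.
move=> eq_nhom; pose diag := [set p : state Y * state Y | p.1 == p.2].
have : 0 < nhom_ker Z diag.
  rewrite -(nhom_ker_eq (eq_nhom Y)); apply/card_gt0P; exists [ffun y => y].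
  rewrite inE; apply/andP; split; first by apply/forallP => y; rewrite !ffunE.
  by apply/eqP/setP => p; rewrite !inE !ffunE.
case/card_gt0P => g; rewrite inE => /andP[g_hom /eqP ker_g]; exists g => // y y' eq_g.
have : (y, y') \in kernel g by rewrite inE eq_g.
by rewrite ker_g inE => /eqP.
Qed.

Lemma same_nhom_iso Y Z : same_nhom Y Z -> fds_iso Y Z.
Proof.
move=> eq_nhom; have [g g_hom g_inj] := same_nhom_injective_hom eq_nhom.
have [g' _ g'_inj] := same_nhom_injective_hom (fun X th => esym (eq_nhom X th)).
exists g; split; first by apply: inj_card_bij g_inj _; apply: leq_card g'_inj.
by move=> y; apply/eqP; move/forallP: g_hom.
Qed.

Lemma fixpoint_cancellative A : has_fixpoint A -> cancellative A.
Proof.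
move=> fixA B C isoAB_AC; apply: same_nhom_iso => X th; apply/eqP.
by rewrite -(eqn_pmul2l (nhom_gt0 th fixA)) -!nhom_prod (nhom_iso th isoAB_AC).
Qed.

Section Periodic.
Variables (T : finType) (f : T -> T).

Lemma iter_card_periodic a : fconnect f (f (iter #|T| f a)) (iter #|T| f a).
Proof.
have /trajectP[i lt_i_T def_x] : looping f a #|T|.
  apply: contraT; rewrite -looping_uniq => /card_uniqP.
  rewrite size_traject => card_traject.
  by have := max_card (mem (traject f a #|T|.+1)); rewrite card_traject ltnn.
rewrite fconnect_f; apply/(orbitPcycle 3 0); exists (#|T| - i).-1.
by rewrite prednK ?subn_gt0 // {1}def_x -iterD subnK // ltnW.
Qed.

Variable x : T.
Hypothesis x_periodic : fconnect f (f x) x.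

Lemma fconnect_periodic_sym y : fconnect f x y -> fconnect f y x.
Proof.
have := x_periodic; rewrite fconnect_f fconnect_orbit => x_cycle y_in.
exact: connect_cycle x_cycle _ _ y_in (in_orbit f x).
Qed.

Lemma froot_periodic_step : froot f (f x) = froot f x.
Proof.
have same_orbit : fconnect f (f x) =1 fconnect f x.
  by move=> y; rewrite /= (fconnect_eqVf _ x); case: eqP => [<-|].
rewrite /root (eq_pick same_orbit); case: pickP => // /(_ x).
by rewrite connect0.
Qed.

End Periodic.

Section NoFixpoint.
Variable A : FDS.
Local Notation T := (state A).
Local Notation f := (dyn A).

(* With r and c on a common cycle, the two shifts add up to a full turn. *)
Definition shift (r c : T) (removing : bool) : T -> T :=
  iter (if removing then findex f c r else findex f r c) f.

Definition config := ({set T} * {ffun T -> T})%type.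

Definition admissible (b : bool) (p : config) : bool :=
  (odd #|p.1| == b) && [forall q, fconnect f q (p.2 q)].

Definition config_step (p : config) : config :=
  (p.1, [ffun q => if q \in p.1 then f (p.2 q) else p.2 q]).

Definition toggle (r c : T) (p : config) : config :=
  (if r \in p.1 then p.1 :\ r else r |: p.1,
   [ffun q => if q == r then shift r c (r \in p.1) (p.2 q) else p.2 q]).

Lemma admissible_fconnect b p q : admissible b p -> fconnect f q (p.2 q).
Proof. by case/andP=> _ /forallP. Qed.

Lemma admissible_step b p : admissible b p -> admissible b (config_step p).
Proof.
case/andP=> odd_p /forallP p_orbit; rewrite /admissible odd_p /=.
apply/forallP => q; rewrite ffunE; case: ifP => _ //.
exact: connect_trans (p_orbit q) (fconnect1 f _).
Qed.

Lemma admissible_toggle r c b p :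
  admissible b p -> admissible (~~ b) (toggle r c p).
Proof.
case: p => S x /andP[/= /eqP odd_S /forallP x_orbit]; apply/andP; split=> /=.
  rewrite -odd_S; case: ifP => r_in.
    by rewrite (cardsD1 r S) r_in negbK.
  by rewrite cardsU1 r_in.
apply/forallP => q; rewrite ffunE; case: eqP => _ //.
exact: connect_trans (x_orbit q) (fconnect_iter f _ _).
Qed.

Section Toggle.
Variables r c : T.
Hypotheses (c_periodic : fconnect f (f c) c) (c_to_r : fconnect f c r).

Let r_to_c : fconnect f r c := fconnect_periodic_sym c_periodic c_to_r.

Lemma shiftK b v : fconnect f r v -> shift r c (~~ b) (shift r c b v) = v.
Proof.
move=> r_to_v; rewrite -(iter_findex r_to_v).
have loop : iter (findex f c r + findex f r c) f r = r by rewrite iterD !iter_findex.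
by case: b; rewrite /shift /= -!iterD addnC iterD ?loop // addnC loop.
Qed.

Lemma shift_add_step v :
  fconnect f r v -> shift r (f c) false v = f (shift r c false v).
Proof.
move=> r_to_v; have r_to_fc := connect_trans r_to_c (fconnect1 f c).
rewrite /shift /= -(iter_findex r_to_v) -!iterD !(addnC _ (findex f r v)) !iterD.
by rewrite (iter_findex r_to_fc) (iter_findex r_to_c) -iterS iterSr.
Qed.

Lemma shift_remove_step v :
  fconnect f r v -> shift r (f c) true (f v) = shift r c true v.
Proof.
move=> r_to_v; have fc_to_r := connect_trans c_periodic c_to_r.
have c_to_v := connect_trans c_to_r r_to_v.
rewrite /shift -(iter_findex c_to_v) -iterS iterSr.
rewrite -!iterD !(addnC _ (findex f c v)) !iterD.
by rewrite (iter_findex fc_to_r) (iter_findex c_to_r).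
Qed.

Lemma toggleK S (x : {ffun T -> T}) :
  fconnect f r (x r) -> toggle r c (toggle r c (S, x)) = (S, x).
Proof.
move=> r_to_xr; rewrite /toggle /=.
case r_in: (r \in S); rewrite ?setD11 ?setU11 ?setD1K ?setU1K ?r_in //;
  congr (_, _); apply/ffunP => q; rewrite !ffunE; case: eqP => [->|//].
  exact: (shiftK true).
exact: (shiftK false).
Qed.

Lemma toggle_step S (x : {ffun T -> T}) :
  fconnect f r (x r) ->
  toggle r (f c) (config_step (S, x)) = config_step (toggle r c (S, x)).
Proof.
move=> r_to_xr; rewrite /toggle /config_step /=; congr (_, _).
apply/ffunP => q; rewrite !ffunE; case: (q =P r) => [->|/eqP /negPf q_neq_r].
  by case: (r \in S); rewrite /= ?setD11 ?setU11 ?shift_remove_step ?shift_add_step.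
by case: (r \in S); rewrite !inE q_neq_r.
Qed.

End Toggle.

Definition cycle_point (a : T) : T := iter #|T| f a.
(* The forward orbit of a periodic point is its cycle, so froot picks the same
   point on the whole cycle even though f need not be injective. *)
Definition cycle_root (a : T) : T := froot f (cycle_point a).

Lemma cycle_point_periodic a : fconnect f (f (cycle_point a)) (cycle_point a).
Proof. exact: iter_card_periodic. Qed.

Lemma cycle_point_to_root a : fconnect f (cycle_point a) (cycle_root a).
Proof. exact: connect_root. Qed.

Lemma cycle_point_step a : cycle_point (f a) = f (cycle_point a).
Proof. by rewrite /cycle_point -iterSr. Qed.

Lemma cycle_root_step a : cycle_root (f a) = cycle_root a.
Proof.
by rewrite /cycle_root cycle_point_step froot_periodic_step ?cycle_point_periodic.
Qed.

Definition parity_state (b : bool) := {p : config | admissible b p}.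

Definition parity_step b (y : parity_state b) : parity_state b :=
  exist _ (config_step (sval y)) (admissible_step (svalP y)).

Definition parity_fds (b : bool) : FDS := MkFDS (@parity_step b).

Definition toggle_at b (a : T) (y : parity_state b) : parity_state (~~ b) :=
  exist _ (toggle (cycle_root a) (cycle_point a) (sval y))
    (admissible_toggle _ _ (svalP y)).

Lemma toggle_atK b a (y : parity_state b) :
  sval (toggle_at a (toggle_at a y)) = sval y.
Proof.
case: y => -[S x] adm_Sx /=.
apply: toggleK; [exact: cycle_point_periodic | exact: cycle_point_to_root |].
exact: admissible_fconnect adm_Sx.
Qed.

Lemma toggle_at_step b a (y : parity_state b) :
  toggle_at (f a) (parity_step y) = parity_step (toggle_at a y).
Proof.
apply: val_inj; case: y => -[S x] adm_Sx /=.
rewrite cycle_root_step cycle_point_step.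
apply: toggle_step; [exact: cycle_point_periodic | exact: cycle_point_to_root |].
exact: admissible_fconnect adm_Sx.
Qed.

Lemma prod_parity_iso :
  fds_iso (fds_prod A (parity_fds false)) (fds_prod A (parity_fds true)).
Proof.
exists (fun p : T * parity_state false => (p.1, toggle_at p.1 p.2)); split.
  exists (fun p : T * parity_state true => (p.1, toggle_at p.1 p.2));
    by move=> [a y]; congr (_, _); apply: val_inj; exact: toggle_atK.
by move=> [a y] /=; rewrite toggle_at_step.
Qed.

Lemma parity_false_fixpoint : has_fixpoint (parity_fds false).
Proof.
have adm0 : admissible false (set0, [ffun q => q]).
  by rewrite /admissible cards0; apply/forallP => q; rewrite ffunE connect0.
exists (exist (admissible false) _ adm0); apply: val_inj; congr (_, _).
by apply/ffunP => q; rewrite !ffunE inE.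
Qed.

Lemma parity_true_fixpoint : has_fixpoint (parity_fds true) -> has_fixpoint A.
Proof.
case=> -[[S x] /andP[odd_S _]] /(congr1 sval) [] /ffunP fix_x.
have /card_gt0P[q q_in] : 0 < #|S| by case: #|S| odd_S.
by exists (x q); have := fix_x q; rewrite !ffunE q_in.
Qed.

End NoFixpoint.

Lemma cancellative_fixpoint A : cancellative A -> has_fixpoint A.
Proof.
move=> cancA; apply: parity_true_fixpoint.
exact: fds_iso_fixpoint (cancA _ _ (prod_parity_iso A)) (parity_false_fixpoint A).
Qed.

Theorem mainTheorem1 (A : FDS) : cancellative A <-> has_fixpoint A.
Proof. by split; [apply: cancellative_fixpoint | apply: fixpoint_cancellative]. Qed.
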